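(* Let $q=2^n$, let $B$ be a $k$-subset of $\mathrm{GF}(q)$ with $k\ge3$, and let $\mathcal B=\mathrm{GA}_1(q)(B)$. Then the following are equivalent: (1) $(\mathrm{GF}(q),\mathcal B)$ is a $3$-design; (2) $\sum_{x,y\in\mathrm{GF}(q)}(-1)^{f_B(x)+f_B(y)+f_B(ux+(1+u)y)}$ is independent of $u\in\mathrm{GF}(q)\setminus\mathrm{GF}(2)$; (3) $\sum_{\alpha\in\mathrm{GF}(q)}\hat f_B(\alpha)\hat f_B(u\alpha)\hat f_B((1+u)\alpha)$ is independent of $u\in\mathrm{GF}(q)\setminus\mathrm{GF}(2)$; (4) $N_B(u,1+u,1)$ is independent of $u\in\mathrm{GF}(q)\setminus\mathrm{GF}(2)$.
   Context: $\mathrm{Tr}$ is the absolute trace $\mathrm{GF}(2^n)\to\mathrm{GF}(2)$. $f_B$ is the characteristic function of $B$ as a Boolean function, and $\hat f(\mu)=\sum_{x\in\mathrm{GF}(2^n)}(-1)^{f(x)+\mathrm{Tr}(\mu x)}$ is the Walsh transform. $N_B(a,b,c)$ is the number of triples $(x,y,z)\in B^3$ with $ax+by+cz=0$. $\mathrm{GA}_1(q)$ is the group of permutations $x\mapsto ax+b$ of $\mathrm{GF}(q)$ with $a\ne0$; $\mathrm{GA}_1(q)(B)=\{\pi(B):\pi\in\mathrm{GA}_1(q)\}$. A pair $(\mathcal P,\mathcal B)$ with $\mathcal B$ a set of $k$-subsets of $\mathcal P$ is a $3$-design if every $3$-subset of $\mathcal P$ lies in exactly $\lambda$ members of $\mathcal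 B$ for some constant $\lambda$. *)

From HB Require Import structures.
From mathcomp Require Import all_boot all_order all_algebra all_field.
Set Implicit Arguments. Unset Strict Implicit. Unset Printing Implicit Defensive.
Import Order.TTheory GRing.Theory Num.Theory.
Local Open Scope ring_scope.

Section Defs.
Variables (F : finFieldType) (n : nat).

(* absolute trace GF(2^n) -> GF(2), valued in the prime subfield of F *)
Definition Tr (x : F) : F := \sum_(i < n) x ^+ (2 ^ i).

Definition chi (t : F) : int := if t == 0 then 1 else -1.

Definition fB (B : {set F}) (x : F) : F := (x \in B)%:R.

Definition walsh (B : {set F}) (mu : F) : int :=
  \sum_(x : F) chi (fB B x + Tr (mu * x)).

Definition NB (B : {set F}) (a b c : F) : nat :=
  #|[set t : F * F * F | [&& t.1.1 \in B, t.1.2 \in B, t.2 \in B &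
                            a * t.1.1 + b * t.1.2 + c * t.2 == 0]]|.

Definition GA1_orbit (B : {set F}) : {set {set F}} :=
  [set (fun x => ab.1 * x + ab.2) @: B | ab in [set ab : F * F | ab.1 != 0]].

Definition is_3design (Blocks : {set {set F}}) : Prop :=
  exists lambda : nat, forall T : {set F}, #|T| = 3%N ->
    #|[set X in Blocks | T \subset X]| = lambda.

End Defs.

From HB Require Import structures.
From mathcomp Require Import all_boot all_order all_algebra all_field.
From mathcomp Require Import ring.
Set Implicit Arguments. Unset Strict Implicit. Unset Printing Implicit Defensive.
Import Order.TTheory GRing.Theory Num.Theory.
Local Open Scope ring_scope.

(* An affine map of GF(q) is determined by the images of two distinct points and
   preserves affine combinations.  Hence, up to the order of the stabiliser of B,
   the number of blocks through {t1, t2, t3} is N(u) - |B|, where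
   t3 = u t1 + (1 - u) t2 and N(u) counts the (x, y, z) in B^3 with
   z = u x + (1 - u) y; as every u outside GF(2) arises this way, (1) <-> (4).
   Writing (-1)^f_B = 1 - 2 1_B and expanding, the sum in (2) is
   q^2 - 6kq + 12k^2 - 8 N(u); by orthogonality of the additive characters
   x |-> (-1)^Tr(a x), the sum in (3) is q times the sum in (2). *)

Lemma exists_const_transfer (T : finType) (a b : T) (A C : Type)
    (f : T -> A) (g : T -> C) (h : A -> C) :
  injective h -> (forall u, u != a -> u != b -> g u = h (f u)) ->
  (exists c, forall u, u != a -> u != b -> g u = c) <->
  (exists c, forall u, u != a -> u != b -> f u = c).
Proof.
move=> h_inj gE; split=> [[c gc]|[c fc]]; last first.
  by exists (h c) => u ua ub; rewrite gE // fc.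
have [u0 /andP [u0a u0b]|none] := pickP (fun u => (u != a) && (u != b)).
  by exists (f u0) => u ua ub; apply: h_inj; rewrite -!gE // !gc.
by exists (f a) => u ua ub; move: (none u); rewrite ua ub.
Qed.

Lemma cards3 (T : finType) (a b c : T) :
  a != b -> b != c -> a != c -> #|[set a; b; c]| = 3%N.
Proof.
by move=> ab bc ac; rewrite -setUA cardsU1 cards2 bc !inE negb_or ab ac.
Qed.

Lemma cards3P (T : finType) (A : {set T}) : #|A| = 3%N ->
  exists t1 t2 t3, [/\ t1 != t2, t2 != t3, t1 != t3 & A = [set t1; t2; t3]].
Proof.
move=> A3; have /card_gt2P [x [y [z [[Ax Ay Az] [xy yz zx]]]]] : (2 < #|A|)%N by rewrite A3.
exists x, y, z; rewrite eq_sym in zx; split=> //.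
by apply/eqP; rewrite eq_sym eqEcard A3 cards3 // !subUset !sub1set Ax Ay Az.
Qed.

Lemma sub3set (T : finType) (t1 t2 t3 : T) (A : {set T}) :
  ([set t1; t2; t3] \subset A) = [&& t1 \in A, t2 \in A & t3 \in A].
Proof. by rewrite !subUset !sub1set andbA. Qed.

Section AffineOrbit.
Variables (F : finFieldType) (B : {set F}).

Definition affine (p : F * F) (x : F) : F := p.1 * x + p.2.
Definition affine_comp (p r : F * F) : F * F := (p.1 * r.1, p.1 * r.2 + p.2).
Definition affine_inv (p : F * F) : F * F := (p.1^-1, - (p.2 / p.1)).

Lemma affine_compE p r x : affine (affine_comp p r) x = affine p (affine r x).
Proof. by rewrite /affine /=; ring. Qed.

Lemma affineK p : p.1 != 0 -> cancel (affine p) (affine (affine_inv p)).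
Proof. by move=> p1 x; rewrite /affine /=; field. Qed.

Lemma affineVK p : p.1 != 0 -> cancel (affine (affine_inv p)) (affine p).
Proof. by move=> p1 x; rewrite /affine /=; field. Qed.

Lemma affine_inv_neq0 p : p.1 != 0 -> (affine_inv p).1 != 0.
Proof. by rewrite invr_eq0. Qed.

Lemma affine_invK p : p.1 != 0 -> affine_inv (affine_inv p) = p.
Proof. by case: p => a b /= a0; rewrite /affine_inv /= invrK; congr (_, _); field. Qed.

Lemma affine_comp_invK p r : p.1 != 0 -> affine_comp p (affine_comp (affine_inv p) r) = r.
Proof. by case: p r => a b [c d] /= a0; rewrite /affine_comp /=; congr (_, _); field. Qed.

Lemma mem_affine_imset p t : p.1 != 0 ->
  (t \in affine p @: B) = (affine (affine_inv p) t \in B).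
Proof.
by move=> p1; rewrite (can2_imset_pre _ (affineK p1) (affineVK p1)) inE.
Qed.

Definition stab := [set p : F * F | (p.1 != 0) && (affine p @: B == B)].

Lemma GA1_orbitP X :
  reflect (exists2 p : F * F, p.1 != 0 & X = affine p @: B) (X \in GA1_orbit B).
Proof. by apply: (iffP imsetP) => -[p]; rewrite ?inE => p1 ->; exists p; rewrite ?inE. Qed.

Lemma stab_gt0 : (0 < #|stab|)%N.
Proof.
apply/card_gt0P; exists (1, 0); rewrite inE oner_neq0 /=.
by apply/eqP; rewrite -[RHS]imset_id; apply: eq_imset => x; rewrite /affine mul1r addr0.
Qed.

Lemma card_affine_fiber X : X \in GA1_orbit B ->
  #|[set p : F * F | (p.1 != 0) && (affine p @: B == X)]| = #|stab|.
Proof.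
case/GA1_orbitP => p0 p01 ->.
suff -> : [set p : F * F | (p.1 != 0) && (affine p @: B == affine p0 @: B)]
          = affine_comp p0 @: stab.
  apply: card_imset => r r' [/(mulfI p01) e1 /addIr /(mulfI p01) e2].
  by case: r r' e1 e2 => ? ? [? ?] /= -> ->.
apply/setP => p; rewrite inE; apply/andP/imsetP => [[p1 /eqP pB]|[r]].
- exists (affine_comp (affine_inv p0) p); last by rewrite affine_comp_invK.
  rewrite inE /= mulf_neq0 ?affine_inv_neq0 //=.
  rewrite (eq_imset _ (affine_compE _ _)) imset_comp pB -imset_comp.
  by rewrite (eq_imset _ (affineK p01)) imset_id.
- rewrite inE => /andP [r1 /eqP rB] ->; split; first by rewrite mulf_neq0.
  by rewrite (eq_imset _ (affine_compE _ _)) imset_comp rB.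
Qed.

Definition covering_maps (T : {set F}) :=
  [set p : F * F | (p.1 != 0) && (T \subset affine p @: B)].

Lemma card_covering_maps T :
  #|covering_maps T| = (#|stab| * #|[set X in GA1_orbit B | T \subset X]|)%N.
Proof.
rewrite /covering_maps -[LHS]sum1dep_card (partition_big (fun p => affine p @: B)
   (fun X => (X \in GA1_orbit B) && (T \subset X))) /=; last first.
  by move=> p /andP [p1 ->]; rewrite andbT; apply/GA1_orbitP; exists p.
rewrite mulnC -sum_nat_const; apply: eq_big => [X|X]; first by rewrite inE.
move=> /andP [OX TX].
rewrite -(card_affine_fiber OX) sum1dep_card; apply: eq_card => p; rewrite !inE.
by case: (affine p @: B =P X) => [->|]; rewrite ?TX ?andbT ?andbF.
Qed.

Lemma affine_inj p : p.1 != 0 -> injective (affine p).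
Proof. by move=> p1; apply: can_inj (affineK p1). Qed.

Lemma affine_comb p u x y :
  affine p (u * x + (1 - u) * y) = u * affine p x + (1 - u) * affine p y.
Proof. by rewrite /affine; ring. Qed.

Lemma affine_eq2 p r x y : x != y ->
  affine p x = affine r x -> affine p y = affine r y -> p = r.
Proof.
case: p r => a b [c d] xy; rewrite /affine /= => ex ey.
have /eqP : (a - c) * (x - y) = (a * x + b) - (c * x + d) - ((a * y + b) - (c * y + d)).
  by ring.
rewrite ex ey !subrr mulf_eq0 !subr_eq0 (negbTE xy) orbF => /eqP ac.
by move: ex; rewrite ac => /addrI ->.
Qed.

Definition maps_into (T : {set F}) :=
  [set q : F * F | (q.1 != 0) && (affine q @: T \subset B)].

Lemma covering_maps_inv T : covering_maps T = affine_inv @: maps_into T.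
Proof.
apply/setP => p; rewrite inE; apply/andP/imsetP => [[p1 TpB]|[q]].
- exists (affine_inv p); last by rewrite affine_invK.
  rewrite inE affine_inv_neq0 //=; apply/subsetP => _ /imsetP [t tT ->].
  by rewrite -mem_affine_imset // (subsetP TpB).
- rewrite inE => /andP [q1 qTB] ->; split; first exact: affine_inv_neq0.
  apply/subsetP => t tT; rewrite mem_affine_imset ?affine_inv_neq0 // affine_invK //.
  by rewrite (subsetP qTB) ?imset_f.
Qed.

Lemma card_covering_maps_into T : #|covering_maps T| = #|maps_into T|.
Proof.
rewrite covering_maps_inv card_in_imset // => p r.
by rewrite !inE => /andP [p1 _] /andP [r1 _] /(congr1 affine_inv); rewrite !affine_invK.
Qed.

Definition ncomb (u : F) :=
  #|[set xy : F * F | [&& xy.1 \in B, xy.2 \in B & u * xy.1 + (1 - u) * xy.2 \in B]]|.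

Definition ncomb_offdiag (u : F) :=
  #|[set xy : F * F |
     [&& xy.1 != xy.2, xy.1 \in B, xy.2 \in B & u * xy.1 + (1 - u) * xy.2 \in B]]|.

Lemma ncomb_split u : ncomb u = (ncomb_offdiag u + #|B|)%N.
Proof.
rewrite /ncomb -(cardsID [set xy : F * F | xy.1 == xy.2]) addnC; congr (_ + _)%N.
  by apply: eq_card => -[x y]; rewrite !inE.
rewrite -(card_imset B (f := fun x => (x, x))); last by move=> x y [].
apply: eq_card => -[x y]; rewrite !inE /=.
apply/andP/imsetP => [[/and3P [xB _ _] /eqP <-]|[z zB [-> ->]]]; first by exists x.
by rewrite -mulrDl subrKC mul1r zB.
Qed.

Lemma card_maps_into_triple t1 t2 t3 : t1 != t2 ->
  #|maps_into [set t1; t2; t3]| = ncomb_offdiag ((t2 - t3) / (t2 - t1)).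
Proof.
move=> t12; set u := (t2 - t3) / (t2 - t1).
have t21 : t2 - t1 != 0 by rewrite subr_eq0 eq_sym.
have t3E : u * t1 + (1 - u) * t2 = t3 by rewrite /u; field.
have maps_intoE q : (q \in maps_into [set t1; t2; t3]) =
    [&& q.1 != 0, affine q t1 \in B, affine q t2 \in B & affine q t3 \in B].
  by rewrite inE !imsetU !imset_set1 sub3set.
rewrite /ncomb_offdiag -(card_imset _ (f := fun q => (affine q t1, affine q t2))); last first.
  by move=> q r [e1 e2]; apply: affine_eq2 t12 e1 e2.
apply: eq_card => -[x y]; rewrite inE /=; apply/imsetP/and4P => [[q]|[xy xB yB zB]].
  rewrite maps_intoE -t3E affine_comb => /and4P [q1 ? ? ?] [-> ->].
  by rewrite (inj_eq (affine_inj q1)).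
have t12' : t1 - t2 != 0 by rewrite subr_eq0.
pose q := ((x - y) / (t1 - t2), x - (x - y) / (t1 - t2) * t1).
have qt1 : affine q t1 = x by rewrite /affine /=; ring.
have qt2 : affine q t2 = y by rewrite /affine /=; field.
exists q; last by rewrite qt1 qt2.
by rewrite maps_intoE -t3E affine_comb qt1 qt2 xB yB zB !andbT mulf_neq0 ?invr_eq0 ?subr_eq0.
Qed.

Lemma GA1_orbit_3designE :
  is_3design (GA1_orbit B) <-> exists c, forall u, u != 0 -> u != 1 -> ncomb u = c.
Proof.
have key t1 t2 t3 : t1 != t2 ->
    (#|stab| * #|[set X in GA1_orbit B | [set t1; t2; t3] \subset X]| + #|B|)%N
    = ncomb ((t2 - t3) / (t2 - t1)).
  move=> t12; rewrite -card_covering_maps card_covering_maps_into.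
  by rewrite card_maps_into_triple // ncomb_split.
split=> [[lam Blam] | [c Nc]].
  exists (#|stab| * lam + #|B|)%N => u u0 u1.
  (* the triple [0; 1; 1 - u] realises u *)
  have -> : u = (1 - (1 - u)) / (1 - 0) by rewrite subKr subr0 divr1.
  rewrite -key ?(eq_sym 0) ?oner_neq0 // Blam // cards3 // ?(eq_sym 0) ?oner_neq0 //.
    by rewrite -subr_eq0 subKr.
  by rewrite subr_eq0 eq_sym.
exists ((c - #|B|) %/ #|stab|)%N => T /cards3P [t1 [t2 [t3 [t12 t23 t13 ->]]]].
rewrite -(Nc ((t2 - t3) / (t2 - t1))) -?key // ?addnK ?mulKn ?stab_gt0 //.
  by rewrite mulf_neq0 ?invr_eq0 ?subr_eq0 // eq_sym.
by apply: contra t13 => /eqP /divr1_eq /addrI /oppr_inj ->.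
Qed.

End AffineOrbit.

Section Indicator.
Variables (F : finFieldType) (B : {set F}).

Definition ind (x : F) : int := (x \in B)%:R.

Lemma sum_ind : \sum_x ind x = #|B|%:R.
Proof.
rewrite -sum1_card natr_sum [RHS]big_mkcond /=.
by apply: eq_bigr => x _; rewrite /ind; case: (x \in B).
Qed.

Lemma sum_ind_inj (h : F -> F) : injective h -> \sum_x ind (h x) = #|B|%:R.
Proof. by move=> h_inj; rewrite -sum_ind [RHS](reindex_inj h_inj). Qed.

Lemma ncomb_sum u :
  (ncomb B u)%:R = \sum_x \sum_y ind x * ind y * ind (u * x + (1 - u) * y) :> int.
Proof.
rewrite /ncomb -sum1dep_card natr_sum big_mkcond pair_bigA /=; apply: eq_bigr => -[x y] _ /=.
by rewrite /ind; case: (x \in B); case: (y \in B); case: (_ \in B).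
Qed.

Lemma sum_signs3 u : u != 0 -> u != 1 ->
  \sum_x \sum_y (1 - 2 * ind x) * (1 - 2 * ind y) * (1 - 2 * ind (u * x + (1 - u) * y))
  = #|F|%:R ^+ 2 - 6 * #|B|%:R * #|F|%:R + 12 * #|B|%:R ^+ 2 - 8 * (ncomb B u)%:R.
Proof.
move=> u0 u1; have u1' : 1 - u != 0 by rewrite subr_eq0 eq_sym.
set q : int := #|F|%:R; set k : int := #|B|%:R.
have sum_k : \sum_x ind x = k := sum_ind.
have sum_Lx x : \sum_y ind (u * x + (1 - u) * y) = k.
  by apply: sum_ind_inj => y y' /addrI /(mulfI u1').
have sum_Ly y : \sum_x ind (u * x + (1 - u) * y) = k.
  by apply: sum_ind_inj => x x' /addIr /(mulfI u0).
have sum_const (c : int) : \sum_(x : F) c = c * q by rewrite sumr_const mulr_natr.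
have expand (a b c : int) : (1 - 2 * a) * (1 - 2 * b) * (1 - 2 * c) =
    1 - 2 * a - 2 * b - 2 * c + 4 * (a * b) + 4 * (a * c) + 4 * (b * c) - 8 * (a * b * c).
  by ring.
have sum_1 : \sum_(x : F) \sum_(y : F) (1 : int) = q ^+ 2.
  by rewrite !sum_const mul1r expr2.
have sum_x : \sum_x \sum_(y : F) ind x = k * q.
  by under eq_bigr do rewrite sum_const; rewrite -mulr_suml sum_k.
have sum_y : \sum_(x : F) \sum_y ind y = k * q by rewrite sum_k sum_const.
have sum_L : \sum_x \sum_y ind (u * x + (1 - u) * y) = k * q.
  by under eq_bigr do rewrite sum_Lx; rewrite sum_const.
have sum_xy : \sum_x ind x * \sum_y ind y = k * k by rewrite sum_k -mulr_suml sum_k.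
have sum_xL : \sum_x ind x * \sum_y ind (u * x + (1 - u) * y) = k * k.
  by under eq_bigr do rewrite sum_Lx; rewrite -mulr_suml sum_k.
have sum_yL : \sum_x \sum_y ind y * ind (u * x + (1 - u) * y) = k * k.
  rewrite exchange_big /=.
  by under eq_bigr do rewrite -mulr_sumr sum_Ly; rewrite -mulr_suml sum_k.
under eq_bigr do under eq_bigr do rewrite expand.
under eq_bigr do rewrite !big_split !sumrN -!mulr_sumr /=.
rewrite !big_split !sumrN -!mulr_sumr /= ncomb_sum.
by rewrite sum_1 sum_x sum_y sum_L sum_xy sum_xL sum_yL; ring.
Qed.

End Indicator.

Section Char2.
Variables (F : finFieldType) (F2 : 2 \in [pchar F]).

Definition is_bit (t : F) := (t == 0) || (t == 1).

Lemma is_bitD a b : is_bit a -> is_bit b -> is_bit (a + b).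
Proof.
by rewrite /is_bit => /orP [] /eqP -> /orP [] /eqP ->;
  rewrite ?addr0 ?add0r ?(addrr_pchar2 F2) ?eqxx ?orbT.
Qed.

Lemma chiD a b : is_bit a -> is_bit b -> chi (a + b) = chi a * chi b.
Proof.
by rewrite /is_bit /chi => /orP [] /eqP -> /orP [] /eqP ->;
  rewrite ?addr0 ?add0r ?(addrr_pchar2 F2) ?eqxx ?oner_eq0.
Qed.

Variable B : {set F}.

Lemma is_bit_fB x : is_bit (fB B x).
Proof. by rewrite /is_bit /fB; case: (x \in B); rewrite ?eqxx ?orbT. Qed.

Lemma chi_fB x : chi (fB B x) = 1 - 2 * ind B x.
Proof. by rewrite /chi /fB /ind; case: (x \in B); rewrite ?oner_eq0 ?eqxx. Qed.

Lemma NB_ncomb u : NB B u (1 + u) 1 = ncomb B u.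
Proof.
have oneE : 1 + u = 1 - u by rewrite (oppr_pchar2 F2).
rewrite /NB /ncomb oneE.
rewrite -(card_imset _ (f := fun xy => (xy, u * xy.1 + (1 - u) * xy.2))); last by move=> ? ? [].
apply: eq_card => -[[x y] z]; rewrite !inE /= mul1r addr_eq0 (oppr_pchar2 F2 z).
apply/and4P/imsetP => [[xB yB zB /eqP zE]|[[x' y'] + [-> -> ->]]].
  by exists (x, y); rewrite ?inE /= ?xB ?yB ?zE.
by rewrite inE /= => /and3P [-> -> ->].
Qed.

Lemma sum_chi_fB3 u : u != 0 -> u != 1 ->
  \sum_x \sum_y chi (fB B x + fB B y + fB B (u * x + (1 + u) * y))
  = #|F|%:R ^+ 2 - 6 * #|B|%:R * #|F|%:R + 12 * #|B|%:R ^+ 2 - 8 * (ncomb B u)%:R.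
Proof.
move=> u0 u1; have oneE : 1 + u = 1 - u by rewrite (oppr_pchar2 F2).
rewrite -sum_signs3 //; apply: eq_bigr => x _; apply: eq_bigr => y _.
by rewrite oneE !chiD ?is_bitD ?is_bit_fB // !chi_fB.
Qed.

End Char2.

Lemma poly_nonroot (F : finFieldType) (p : {poly F}) :
  p != 0 -> (size p <= #|F|)%N -> exists x, ~~ root p x.
Proof.
move=> p0 szp; apply/existsP; rewrite -negb_forall; apply: contraL szp => /forallP roots.
rewrite -ltnNge cardE; apply: max_poly_roots p0 _ (enum_uniq _).
by apply/allP => x _; apply: roots.
Qed.

Section Trace.
Variables (n : nat) (F : finFieldType) (hF : #|F| = (2 ^ n)%N).

Lemma pchar2_card : 2 \in [pchar F].
Proof. exact: card_finPcharP hF (isT : prime 2). Qed.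

Lemma log_card_gt0 : (0 < n)%N.
Proof. by case: n hF => // /eqP; rewrite gtn_eqF ?finNzRing_gt1. Qed.

Lemma Tr_add (a b : F) : Tr n (a + b) = Tr n a + Tr n b.
Proof.
rewrite /Tr -big_split; apply: eq_bigr => i _; apply: exprDn_pchar.
by rewrite pnatX pnatE // pchar2_card.
Qed.

Lemma Tr0 : Tr n 0 = 0 :> F.
Proof. by apply: (addrI (Tr n 0)); rewrite -Tr_add !addr0. Qed.

Lemma Tr_sqr (a : F) : Tr n a ^+ 2 = Tr n a.
Proof.
rewrite /Tr -(pFrobenius_autE pchar2_card) rmorph_sum /=.
under eq_bigr do rewrite pFrobenius_autE -exprM -expnSr.
case: n hF log_card_gt0 => // m card_m _.
by rewrite big_ord_recr big_ord_recl /= -card_m expf_card addrC.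
Qed.

Lemma is_bit_Tr (a : F) : is_bit (Tr n a).
Proof.
have /eqP := Tr_sqr a; rewrite expr2 -subr_eq0 -{3}[Tr n a]mulr1 -mulrBr mulf_eq0.
by rewrite subr_eq0.
Qed.

Lemma Tr_onto : exists a : F, Tr n a = 1.
Proof.
pose P : {poly F} := \sum_(i < n) 'X^(2 ^ i).
have PE x : P.[x] = Tr n x by rewrite horner_sum; apply: eq_bigr => i _; rewrite hornerXn.
have n0 := log_card_gt0.
have P1 : P`_1 = 1.
  rewrite coef_sum -(prednK n0) big_ord_recl /= coefXn expn0 eqxx big1 ?addr0 // => i _.
  by rewrite coefXn /bump /= add1n -[1%N]/(2 ^ 0)%N eqn_exp2l.
have P0 : P != 0 by apply: contra_eq_neq P1 => ->; rewrite coef0 eq_sym oner_neq0.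
have szP : (size P <= #|F|)%N.
  apply: leq_trans (size_sum _ _ _) _; apply/bigmax_leqP => i _.
  by rewrite size_polyXn hF ltn_exp2l.
have [a] := poly_nonroot P0 szP; rewrite /root PE => Tr_a.
by exists a; have := is_bit_Tr a; rewrite /is_bit (negbTE Tr_a) => /eqP.
Qed.

Lemma sum_chi_Tr_eq0 : \sum_(a : F) chi (Tr n a) = 0.
Proof.
(* translating by some b with Tr b = 1 flips every sign *)
have [b Tr_b] := Tr_onto; set S := \sum_a _.
suff : S + S = 0 by move/eqP; rewrite -mulr2n mulrn_eq0 => /eqP.
rewrite {1}/S (reindex_inj (addIr b)) /= -big_split big1 // => a _.
rewrite Tr_add Tr_b; have := is_bit_Tr a; rewrite /chi.
by case/orP => /eqP ->; rewrite ?add0r ?(addrr_pchar2 pchar2_card) ?eqxx ?oner_eq0.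
Qed.

Lemma sum_chi_Tr (w : F) : \sum_a chi (Tr n (a * w)) = (w == 0)%:R * #|F|%:R.
Proof.
have [->|w0] := eqVneq w 0.
  by under eq_bigr do rewrite mulr0 Tr0 /chi eqxx; rewrite sumr_const mul1r.
by rewrite mul0r -[RHS]sum_chi_Tr_eq0 [RHS](reindex_inj (mulIf w0)).
Qed.

Variable B : {set F}.

Lemma walshE mu : walsh n B mu = \sum_x chi (fB B x) * chi (Tr n (mu * x)).
Proof. by apply: eq_bigr => x _; rewrite chiD ?is_bit_fB ?is_bit_Tr ?pchar2_card. Qed.

Lemma sum_walsh3 u :
  \sum_alpha walsh n B alpha * walsh n B (u * alpha) * walsh n B ((1 + u) * alpha)
  = #|F|%:R * \sum_x \sum_y chi (fB B x + fB B y + fB B (u * x + (1 + u) * y)).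
Proof.
have F2 := pchar2_card; set s := fun x => chi (fB B x).
have chi_Tr3 (a b c : F) : chi (Tr n (a + b + c)) = chi (Tr n a) * chi (Tr n b) * chi (Tr n c).
  by rewrite !Tr_add !chiD ?is_bitD ?is_bit_Tr.
have expand (a : F) : walsh n B a * walsh n B (u * a) * walsh n B ((1 + u) * a) =
    \sum_x \sum_y \sum_z s x * s y * s z * chi (Tr n (a * (x + (u * y + (1 + u) * z)))).
  rewrite !walshE big_distrl big_distrl; apply: eq_bigr => x _ /=.
  rewrite -mulrA big_distrl big_distrr; apply: eq_bigr => y _ /=.
  rewrite big_distrr big_distrr; apply: eq_bigr => z _ /=.
  have -> : a * (x + (u * y + (1 + u) * z)) = a * x + u * a * y + (1 + u) * a * z by ring.
  by rewrite chi_Tr3; ring.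
under eq_bigr do rewrite expand.
rewrite exchange_big; under eq_bigr do rewrite exchange_big.
under eq_bigr do under eq_bigr do rewrite exchange_big.
under eq_bigr do under eq_bigr do under eq_bigr do rewrite -mulr_sumr sum_chi_Tr.
(* orthogonality of the characters: for fixed y, z only x = u y + (1 + u) z survives *)
rewrite exchange_big; under eq_bigr do rewrite exchange_big.
rewrite mulr_sumr; apply: eq_bigr => y _; rewrite mulr_sumr; apply: eq_bigr => z _.
rewrite (bigD1 (u * y + (1 + u) * z)) //= addrr_pchar2 // eqxx big1 => [|x].
  by rewrite addr0 /s !chiD ?is_bitD ?is_bit_fB // mul1r; ring.
by rewrite addr_eq0 oppr_pchar2 // => /negbTE ->; rewrite mul0r mulr0.
Qed.

End Trace.

Theorem theorem9 (n : nat) (F : finFieldType) (hF : #|F| = (2 ^ n)%N)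
    (k : nat) (B : {set F}) (hB : #|B| = k) (hk : (3 <= k)%N) :
  [<-> is_3design (GA1_orbit B);
       exists c : int, forall u : F, u != 0 -> u != 1 ->
         \sum_(x : F) \sum_(y : F)
            chi (fB B x + fB B y + fB B (u * x + (1 + u) * y)) = c;
       exists c : int, forall u : F, u != 0 -> u != 1 ->
         \sum_(alpha : F) walsh n B alpha * walsh n B (u * alpha)
                          * walsh n B ((1 + u) * alpha) = c;
       exists c : nat, forall u : F, u != 0 -> u != 1 ->
         NB B u (1 + u) 1 = c].
Proof.
have F2 := pchar2_card hF.
set ncomb_const := exists c, forall u : F, u != 0 -> u != 1 -> ncomb B u = c.
have E1 : is_3design (GA1_orbit B) <-> ncomb_const := GA1_orbit_3designE B.
have E2 : (exists c : int, forall u : F, u != 0 -> u != 1 ->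
    \sum_x \sum_y chi (fB B x + fB B y + fB B (u * x + (1 + u) * y)) = c) <-> ncomb_const.
  apply: (exists_const_transfer (h := fun m : nat => #|F|%:R ^+ 2
      - 6 * #|B|%:R * #|F|%:R + 12 * #|B|%:R ^+ 2 - 8 * m%:R)) => [m m'|u u0 u1].
    by move=> /addrI /oppr_inj /(mulfI (isT : (8 : int) != 0)) /eqP; rewrite eqr_nat => /eqP.
  by rewrite sum_chi_fB3.
have E3 : (exists c : int, forall u : F, u != 0 -> u != 1 ->
    \sum_alpha walsh n B alpha * walsh n B (u * alpha) * walsh n B ((1 + u) * alpha) = c)
    <-> ncomb_const.
  apply: iff_trans E2; apply: (exists_const_transfer (h := *%R #|F|%:R)) => [|u _ _].
    by apply: mulfI; rewrite pnatr_eq0 hF expn_eq0.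
  exact: sum_walsh3.
have E4 : (exists c : nat, forall u : F, u != 0 -> u != 1 -> NB B u (1 + u) 1 = c)
    <-> ncomb_const.
  apply: (exists_const_transfer (h := id)) => [|u _ _]; first exact: inj_id.
  exact: NB_ncomb.
by tfae=> h; [apply/E2/E1 | apply/E3/E2 | apply/E4/E3 | apply/E1/E4].
Qed.
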